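(* Let $L$ be a multisorted algebra in the positive existential signature satisfying axioms (1), (2), (3), (8), and let $F$ be a prime filter on sort $n$ of $L$. Let $F_1,\dots,F_n$ be distinct symbols and $W=\{F_1,\dots,F_n\}$. Define $\varphi\colon L\to A(W)$ on each sort $k$ by: for each substitution $\alpha\colon k\to n$, $\alpha^{\mathrm{tuple}}(F_1,\dots,F_n)\in\varphi(r)$ if and only if $\alpha(r)\in F$. Then $\varphi$ is an almost morphism.
   Context: Signature. There is a sort $n$ for each $n\ge0$. For every function $\alpha\colon\{1,\dots,n\}\to\{1,\dots,k\}$ there is a unary function symbol (''substitution'') $\alpha\colon n\to k$ (argument of sort $n$, value of sort $k$). Each sort has $0,1,\vee,\wedge$; for each $n$ there is $\exists\colon n+1\to n$ (positive existential signature). For $\alpha\colon k\to n$, $\beta\colon n\to m$, $\beta\circ\alpha$ is the substitution symbol of the composite function. The associated cylindrification of $\exists\colon n+1\to n$ is $c\colon n\to n+1$, $c(i)=i$. For a set $W$: $\alpha^{\mathrm{tuple}}(x_1,\dots,x_k)=(x_{\alpha(1)},\dots,x_{\alpha(n)})$, $\alpha^{\mathrm{relation}}(r)=\{\bar x\in W^k:\alpha^{\mathrm{tuple}}(\bar x)\in r\}$. The positive existential algebra $A(W)$ interprets sort $n$ as $\mathcal P(W^n)$, $\alpha$ as $\alpha^{\mathrm{relation}}$, $0,1,\vee,\wedge$ as $\emptyset,W^n,\cup,\cap$, and $\exists(r)=\{\bar x:\exists y\,(\bar x,y)\in r\}$. Since the $F_i$ are distinct, each $k$-tuple from $W$ is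 $\alpha^{\mathrm{tuple}}(F_1,\dots,F_n)$ for exactly one $\alpha\colon k\to n$. An almost morphism $\varphi\colon L\to A(W)$ is a sort-preserving family of maps commuting with all substitutions and with $0,1,\vee,\wedge$, and satisfying $\exists(\varphi(r))\subseteq\varphi(\exists(r))$ for all $r$. Axioms: (1) each sort is a bounded distributive lattice; (2) substitutions preserve $0,1,\vee,\wedge$; (3) $(\beta\circ\alpha)(r)=\beta(\alpha(r))$; (8) $r\le c(\exists(r))$ for all $r$ of sort $n+1$ (where $x\le y$ means $x=x\wedge y$). A prime filter is a proper, nonempty, upward-closed, $\wedge$-closed subset of a sort with $x\vee y\in F\Rightarrow x\in F$ or $y\in F$. *)

From mathcomp Require Import all_boot.
Set Implicit Arguments. Unset Strict Implicit. Unset Printing Implicit Defensive.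

(* A substitution symbol alpha : n -> k
   (a function {1..n} -> {1..k}, here 'I_n -> 'I_k) acts from sort n to sort k. *)
Record PEAlg := {
  car  : nat -> Type;
  sub  : forall n k : nat, ('I_n -> 'I_k) -> car n -> car k;
  zero : forall n, car n;
  one  : forall n, car n;
  join : forall n, car n -> car n -> car n;
  meet : forall n, car n -> car n -> car n;
  ex   : forall n, car n.+1 -> car n }.

Arguments sub {p n k} _ _.
Arguments zero {p n}.
Arguments one {p n}.
Arguments join {p n} _ _.
Arguments meet {p n} _ _.
Arguments ex {p n} _.

Definition le (L : PEAlg) n (x y : car L n) : Prop := x = meet x y.

Definition cyl (n : nat) : 'I_n -> 'I_n.+1 := widen_ord (leqnSn n).

Definition axiom1 (L : PEAlg) : Prop :=
  forall n (x y z : car L n),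
    join x (join y z) = join (join x y) z /\
    meet x (meet y z) = meet (meet x y) z /\
    join x y = join y x /\
    meet x y = meet y x /\
    join x (meet x y) = x /\
    meet x (join x y) = x /\
    meet x (join y z) = join (meet x y) (meet x z) /\
    join x zero = x /\
    meet x one = x.

Definition axiom2 (L : PEAlg) : Prop :=
  forall n k (a : 'I_n -> 'I_k),
    [/\ sub a (@zero L n) = zero,
        sub a (@one L n) = one,
        forall x y : car L n, sub a (join x y) = join (sub a x) (sub a y)
      & forall x y : car L n, sub a (meet x y) = meet (sub a x) (sub a y)].

Definition axiom3 (L : PEAlg) : Prop :=
  forall k n m (a : 'I_k -> 'I_n) (b : 'I_n -> 'I_m) (r : car L k),
    sub (b \o a) r = sub b (sub a r).

Definition axiom8 (L : PEAlg) : Prop :=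
  forall n (r : car L n.+1), le r (sub (@cyl n) (ex r)).

Definition prime_filter (L : PEAlg) n (F : car L n -> Prop) : Prop :=
  [/\ (exists x, ~ F x),
      (exists x, F x),
      (forall x y, F x -> le x y -> F y),
      (forall x y, F x -> F y -> F (meet x y))
    & (forall x y, F (join x y) -> F x \/ F y)].

(* The positive existential algebra A(W): sort n is P(W^n). *)
Definition rel (W : Type) (n : nat) := ('I_n -> W) -> Prop.

Definition tuple_sub (W : Type) n k (a : 'I_n -> 'I_k) (x : 'I_k -> W) : 'I_n -> W :=
  fun i => x (a i).

Definition rel_sub (W : Type) n k (a : 'I_n -> 'I_k) (r : rel W n) : rel W k :=
  fun x => r (tuple_sub a x).

Definition snoc (W : Type) n (x : 'I_n -> W) (y : W) : 'I_n.+1 -> W :=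
  fun i => if unlift ord_max i is Some j then x j else y.

Definition rel_ex (W : Type) n (r : rel W n.+1) : rel W n :=
  fun x => exists y, r (snoc x y).

Definition rel0 (W : Type) n : rel W n := fun _ => False.
Definition rel1 (W : Type) n : rel W n := fun _ => True.
Definition rel_join (W : Type) n (r s : rel W n) : rel W n := fun x => r x \/ s x.
Definition rel_meet (W : Type) n (r s : rel W n) : rel W n := fun x => r x /\ s x.

Definition almost_morphism (L : PEAlg) (W : Type) (phi : forall k, car L k -> rel W k) : Prop :=
  (forall n k (a : 'I_n -> 'I_k) (r : car L n), phi k (sub a r) = rel_sub a (phi n r)) /\
  (forall k, phi k zero = @rel0 W k) /\
  (forall k, phi k one = @rel1 W k) /\
  (forall k (r s : car L k), phi k (join r s) = rel_join (phi k r) (phi k s)) /\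
  (forall k (r s : car L k), phi k (meet r s) = rel_meet (phi k r) (phi k s)) /\
  (forall k (r : car L k.+1) x, rel_ex (phi k.+1 r) x -> phi k (ex r) x).

(* W = {F_1,..,F_n} is represented by 'I_n, with F_i := i.  Hence
   (F_1,..,F_n) is the identity tuple and alpha^tuple(F_1..F_n) is alpha itself
   (as a k-tuple 'I_k -> 'I_n); every k-tuple arises from exactly one alpha. *)
Definition Ftuple (n : nat) : 'I_n -> 'I_n := fun i => i.

Definition phiF (L : PEAlg) n (F : car L n -> Prop) (k : nat) (r : car L k) : rel 'I_n k :=
  fun x => exists a : 'I_k -> 'I_n, x = tuple_sub a (@Ftuple n) /\ F (sub a r).

(* With W = {F_1,..,F_n} every k-tuple over W is a substitution [x : k -> n], so
   [phiF F r] is the set of those [x] with [x(r) \in F].  Compatibility with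
   substitutions is then axiom (3), compatibility with the lattice operations is
   axiom (2) together with [F] being a prime filter, and the existential
   inclusion comes from axiom (8): [r <= c(exists r)], instantiated at the tuple
   (x, y), gives [(x, y)(r) <= x(exists r)] because (x, y) o c = x. *)

From Stdlib Require Import FunctionalExtensionality PropExtensionality.
From mathcomp Require Import all_boot.

Set Implicit Arguments.
Unset Strict Implicit.

Section DistributiveLattice.

Variable L : PEAlg.
Hypothesis latL : axiom1 L.
Variable m : nat.
Implicit Types x y : car L m.

Lemma joinC x y : join x y = join y x.
Proof. by have [_ [_ [->]]] := latL x y x. Qed.

Lemma meetC x y : meet x y = meet y x.
Proof. by have [_ [_ [_ [->]]]] := latL x y x. Qed.

Lemma meetA x y z : meet x (meet y z) = meet (meet x y) z.
Proof. by have [_ [->]] := latL x y z. Qed.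

Lemma joinKI x y : join x (meet x y) = x.
Proof. by have [_ [_ [_ [_ [->]]]]] := latL x y x. Qed.

Lemma meetKU x y : meet x (join x y) = x.
Proof. by have [_ [_ [_ [_ [_ [->]]]]]] := latL x y x. Qed.

Lemma joinx0 x : join x zero = x.
Proof. by have [_ [_ [_ [_ [_ [_ [_ [->]]]]]]]] := latL x x x. Qed.

Lemma meetx1 x : meet x one = x.
Proof. by have [_ [_ [_ [_ [_ [_ [_ [_ ->]]]]]]]] := latL x x x. Qed.

Lemma meetxx x : meet x x = x.
Proof. by rewrite -{2}(joinKI x x) meetKU. Qed.

Lemma le_joinl x y : le x (join x y).
Proof. by rewrite /le (meetKU x y). Qed.

Lemma le_joinr x y : le y (join x y).
Proof. rewrite joinC; exact: le_joinl. Qed.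

Lemma le_meetl x y : le (meet x y) x.
Proof. by rewrite /le (meetC _ x) meetA (meetxx x). Qed.

Lemma le_meetr x y : le (meet x y) y.
Proof. rewrite meetC; exact: le_meetl. Qed.

Lemma lex1 x : le x one.
Proof. by rewrite /le (meetx1 x). Qed.

Lemma le0x x : le zero x.
Proof. by rewrite /le -(joinx0 x) joinC (meetKU zero x). Qed.

End DistributiveLattice.

Section PrimeFilter.

Variables (L : PEAlg) (n : nat) (F : car L n -> Prop).
Hypotheses (latL : axiom1 L) (primeF : prime_filter F).

Lemma filterS x y : le x y -> F x -> F y.
Proof. by have [_ _ upF _ _] := primeF; move=> xy Fx; exact: upF _ _ Fx xy. Qed.

Lemma filter1 : F one.
Proof. by have [_ [x Fx] _ _ _] := primeF; exact: filterS (lex1 latL x) Fx. Qed.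

Lemma filter0N : ~ F zero.
Proof. by have [[x nFx] _ _ _ _] := primeF; move/(filterS (le0x latL x)). Qed.

Lemma filter_join x y : F (join x y) <-> F x \/ F y.
Proof.
have [_ _ _ _ primeJ] := primeF; split; first exact: primeJ.
by case; apply: filterS; [exact: le_joinl | exact: le_joinr].
Qed.

Lemma filter_meet x y : F (meet x y) <-> F x /\ F y.
Proof.
have [_ _ _ meetF _] := primeF; split; last by case; exact: meetF.
by move=> Fxy; split; apply: filterS Fxy; [exact: le_meetl | exact: le_meetr].
Qed.

End PrimeFilter.

Lemma sub_le (L : PEAlg) (subL : axiom2 L) m k (a : 'I_m -> 'I_k) (x y : car L m) :
  le x y -> le (sub a x) (sub a y).
Proof.
move=> xy; have [_ _ _ subM] := subL m k a.
by rewrite /le -subM -xy.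
Qed.

Lemma snoc_cyl (W : Type) m (x : 'I_m -> W) (y : W) : snoc x y \o @cyl m = x.
Proof.
apply: functional_extensionality => i /=; rewrite /snoc.
have -> : cyl i = lift ord_max i.
  by apply: val_inj; rewrite /= /bump leqNgt ltn_ord.
by rewrite liftK.
Qed.

Lemma rel_ext (W : Type) k (P Q : rel W k) : (forall x, P x <-> Q x) -> P = Q.
Proof.
by move=> PQ; apply: functional_extensionality => x; apply: propositional_extensionality.
Qed.

Section PhiF.

Variables (L : PEAlg) (n : nat) (F : car L n -> Prop).

Lemma phiFE k (r : car L k) (x : 'I_k -> 'I_n) : phiF F r x <-> F (sub x r).
Proof. by split=> [[a [-> Fa]] | Fx]; last by exists x. Qed.

Hypotheses (latL : axiom1 L) (subL : axiom2 L) (compL : axiom3 L) (cylL : axiom8 L).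
Hypothesis primeF : prime_filter F.

Lemma phiF_sub m k (a : 'I_m -> 'I_k) (r : car L m) : phiF F (sub a r) = rel_sub a (phiF F r).
Proof. by apply: rel_ext => x; rewrite /rel_sub !phiFE -compL. Qed.

Lemma phiF0 k : phiF F (@zero L k) = @rel0 'I_n k.
Proof.
apply: rel_ext => x; rewrite phiFE; have [-> _ _ _] := subL x.
by split=> //; exact: filter0N.
Qed.

Lemma phiF1 k : phiF F (@one L k) = @rel1 'I_n k.
Proof.
apply: rel_ext => x; rewrite phiFE; have [_ -> _ _] := subL x.
by split=> // _; exact: filter1.
Qed.

Lemma phiF_join k (r s : car L k) : phiF F (join r s) = rel_join (phiF F r) (phiF F s).
Proof.
apply: rel_ext => x; rewrite /rel_join !phiFE; have [_ _ -> _] := subL x.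
exact: filter_join.
Qed.

Lemma phiF_meet k (r s : car L k) : phiF F (meet r s) = rel_meet (phiF F r) (phiF F s).
Proof.
apply: rel_ext => x; rewrite /rel_meet !phiFE; have [_ _ _ ->] := subL x.
exact: filter_meet.
Qed.

Lemma phiF_ex k (r : car L k.+1) x : rel_ex (phiF F r) x -> phiF F (ex r) x.
Proof.
case=> y; rewrite !phiFE => Fr.
apply: (filterS primeF _ Fr).
by rewrite -{2}(snoc_cyl x y) compL; apply: sub_le; last exact: cylL.
Qed.

End PhiF.

Theorem lemma4p8 (L : PEAlg) (n : nat) (F : car L n -> Prop) :
  axiom1 L -> axiom2 L -> axiom3 L -> axiom8 L ->
  prime_filter F ->
  almost_morphism (phiF F).
Proof.
move=> latL subL compL cylL primeF.
split; first exact: phiF_sub.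
split; first exact: phiF0.
split; first exact: phiF1.
split; first exact: phiF_join.
split; first exact: phiF_meet.
exact: phiF_ex.
Qed.
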